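(* Let $G$ be a finite graph and $\ell$ a $\mathbb{Z}_2^2$-cordial labeling of $G$. Then for every bijection $\varphi:\mathbb{Z}_2^2\to\mathbb{Z}_2^2$ with $\varphi(0)=0$, the labeling $\varphi\circ\ell$ is also a $\mathbb{Z}_2^2$-cordial labeling of $G$.
   Context: $\mathbb{Z}_2^2=\mathbb{Z}_2\times\mathbb{Z}_2$ is the Klein four-group. For an abelian group $A$ and a graph $G=(V,E)$, a vertex labeling $\ell:V\to A$ induces an edge labeling $\ell(\{v_1,v_2\})=\ell(v_1)+\ell(v_2)$. Let $f_V(a)=|\{v\in V:\ell(v)=a\}|$ and $f_E(a)=|\{e\in E:\ell(e)=a\}|$. The labeling is $A$-cordial if $|f_V(a_1)-f_V(a_2)|\le 1$ and $|f_E(a_1)-f_E(a_2)|\le 1$ for all $a_1,a_2\in A$. *)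

From mathcomp Require Import all_boot all_order all_algebra.
Set Implicit Arguments. Unset Strict Implicit. Unset Printing Implicit Defensive.
Import GRing.Theory.
Local Open Scope ring_scope.

Notation K4 := ('Z_2 * 'Z_2)%type.

Definition simple_graph (V : finType) (adj : rel V) : Prop :=
  symmetric adj /\ irreflexive adj.

Definition edges (V : finType) (adj : rel V) : {set {set V}} :=
  [set E : {set V} | [exists u, exists v, adj u v && (E == [set u; v])]].

(* Induced edge label: l({v1,v2}) = l v1 + l v2 (well defined, since the
   sum is commutative; for E = [set u; v] we take any u, v with E = {u,v}). *)
Definition edge_label (V : finType) (A : zmodType) (l : V -> A) (E : {set V}) : A :=
  \sum_(x in E) l x.

Definition fV (V : finType) (A : zmodType) (l : V -> A) (a : A) : nat :=
  #|[set v : V | l v == a]|.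

Definition fE (V : finType) (adj : rel V) (A : zmodType) (l : V -> A) (a : A) : nat :=
  #|[set E in edges adj | edge_label l E == a]|.

Definition close (m n : nat) : bool := (m <= n.+1)%N && (n <= m.+1)%N.

Definition cordial (V : finType) (adj : rel V) (A : zmodType) (l : V -> A) : Prop :=
  forall a1 a2 : A, close (fV l a1) (fV l a2) && close (fE adj l a1) (fE adj l a2).

(* A permutation of Z_2^2 fixing 0 permutes the three nonzero elements, and
   any two distinct nonzero elements sum to the third one; hence it is a group
   automorphism.  An automorphism phi commutes with the induced edge labeling,
   so phi \o l has exactly the vertex and edge label counts of l, reindexed by
   phi; cordiality only compares these counts among themselves. *)
From mathcomp Require Import all_boot all_order all_algebra.
Set Implicit Arguments. Unset Strict Implicit. Unset Printing Implicit Defensive.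
Import GRing.Theory.
Local Open Scope ring_scope.

Section Relabel.

Variables (V : finType) (adj : rel V) (A : zmodType) (l : V -> A).
Variables (phi psi : A -> A).
Hypotheses (phiK : cancel phi psi) (psiK : cancel psi phi).

Lemma fV_comp (a : A) : fV (phi \o l) a = fV l (psi a).
Proof. by apply: eq_card => v; rewrite !inE /= (can2_eq phiK psiK). Qed.

Hypotheses (phi0 : phi 0 = 0) (phiD : {morph phi : x y / x + y}).

Lemma edge_label_comp (E : {set V}) : edge_label (phi \o l) E = phi (edge_label l E).
Proof. by rewrite /edge_label (big_morph phi phiD phi0). Qed.

Lemma fE_comp (a : A) : fE adj (phi \o l) a = fE adj l (psi a).
Proof.
by apply: eq_card => E; rewrite !inE edge_label_comp (can2_eq phiK psiK).
Qed.

Lemma cordial_comp : cordial adj l -> cordial adj (phi \o l).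
Proof. by move=> cl a1 a2; rewrite !fV_comp !fE_comp; apply: cl. Qed.

End Relabel.

Lemma K4_addxx (x : K4) : x + x = 0.
Proof. by case: x => [[[|[|?]] ?] [[|[|?]] ?]]; apply/eqP. Qed.

Lemma K4_opp (x : K4) : - x = x.
Proof. by apply/esym/eqP; rewrite -addr_eq0 K4_addxx. Qed.

Lemma K4_distinct_nonzero_sum (x y z : K4) :
  [&& x != 0, y != 0, z != 0, x != y, x != z & y != z] -> z = x + y.
Proof.
move=> h; apply/eqP; move: h; apply/implyP.
by case: x y z => [[[|[|?]] ?] [[|[|?]] ?]] [[[|[|?]] ?] [[|[|?]] ?]]
  [[[|[|?]] ?] [[|[|?]] ?]].
Qed.

Lemma K4_inj_morphD (phi : K4 -> K4) :
  injective phi -> phi 0 = 0 -> {morph phi : x y / x + y}.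
Proof.
move=> phi_inj phi0 x y.
have [->|x0] := eqVneq x 0; first by rewrite phi0 !add0r.
have [->|y0] := eqVneq y 0; first by rewrite phi0 !addr0.
have [<-|xy] := eqVneq x y; first by rewrite !K4_addxx phi0.
have xy0 : x + y != 0 by rewrite addr_eq0 K4_opp.
have x_xy : x != x + y by rewrite -{1}[x]addr0 (inj_eq (addrI x)) eq_sym.
have y_xy : y != x + y by rewrite -{1}[y]add0r (inj_eq (addIr y)) eq_sym.
apply: K4_distinct_nonzero_sum; rewrite !(inj_eq phi_inj) -phi0 !(inj_eq phi_inj).
by rewrite x0 y0 xy0 xy x_xy y_xy.
Qed.

Theorem lemma4p2 (V : finType) (adj : rel V) (l : V -> K4) (phi : K4 -> K4) :
  simple_graph adj ->
  cordial adj l ->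
  bijective phi ->
  phi 0%R = 0%R ->
  cordial adj (phi \o l).
Proof.
move=> _ cl [psi phiK psiK] phi0.
have phiD := K4_inj_morphD (can_inj phiK) phi0.
exact: cordial_comp phiK psiK phi0 phiD cl.
Qed.
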